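(* Let $Z=(\varphi^2-z_x\varphi-z_y)\,\varphi_\lambda^2$, where $\varphi_\lambda=d\varphi/d\lambda$. Then $Z$ is a formal Laurent series of the form $Z=\sum_{n\ge-4}Z^{(n)}\lambda^{n-2}$, with coefficients $Z^{(n)}$ functions on the covering $\bar\tau_*$, and each $Z^{(n)}$ is a shadow of a symmetry of the Gibbons–Tsarev equation in $\bar\tau_*$, i.e. $$\tilde D_y^2(Z^{(n)})+z_x\tilde D_x\tilde D_y(Z^{(n)})-z_y\tilde D_x^2(Z^{(n)})+z_{xy}\tilde D_x(Z^{(n)})-z_{xx}\tilde D_y(Z^{(n)})=0 .$$
   Context: The Gibbons–Tsarev equation $\mathcal E$ is $z_{yy}+z_xz_{xy}-z_yz_{xx}+1=0$ with internal coordinates $x,y,z_X$ ($z_X=\partial^{a+b}z/\partial x^a\partial y^b$, $X=x^ay^b$, $b\in\{0,1\}$) and total derivatives $D_x,D_y$. Put $\varphi^{(1)}=-y$, $\varphi^{(2)}=-x$, $\varphi^{(3)}=-z-\tfrac12y^2$, let $\varphi^{(k)}$, $k\ge4$, be new coordinates, and $\varphi(\lambda)=1/\lambda+\sum_{k\ge1}\varphi^{(k)}\lambda^k$. The covering $\bar\tau_*$ has coordinates $x,y,z_X,\varphi^{(k)}$ ($k\ge4$) and commuting total derivatives $\tilde D_x=D_x+\sum_{k\ge4}\varphi^{(k)}_x\partial/\partial\varphi^{(k)}$, $\tilde D_y=D_y+\sum_{k\ge4}\varphi^{(k)}_y\partial/\partial\varphi^{(k)}$, where the functions $\varphi^{(k)}_x,\varphi^{(k)}_y$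 (polynomials in $x,y,z,z_x,z_y,\varphi^{(4)},\dots,\varphi^{(k-1)}$) are uniquely determined by requiring that, with $\varphi_x=\sum_{k\ge1}\tilde D_x(\varphi^{(k)})\lambda^k$, $\varphi_y=\sum_{k\ge1}\tilde D_y(\varphi^{(k)})\lambda^k$, one has $(\varphi^2-z_x\varphi-z_y)\varphi_x=-1$ and $(\varphi^2-z_x\varphi-z_y)\varphi_y=-(\varphi-z_x)$ coefficientwise in $\lambda$. *)

From HB Require Import structures.
From mathcomp Require Import all_boot all_order all_algebra.
Set Implicit Arguments. Unset Strict Implicit. Unset Printing Implicit Defensive.
Import GRing.Theory.
Local Open Scope ring_scope.

Section GT.
Variable A : comUnitRingType.

(* Formal Laurent series in lambda with coefficients in A, bounded below:
   Laurent m c  represents  sum_{i >= 0} c i * lambda^(i - m). *)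
Record laurent := Laurent { lshift : nat; lseq : nat -> A }.

Definition lcoef (f : laurent) (n : int) : A :=
  match (n + (lshift f)%:Z)%R with Posz i => lseq f i | Negz _ => 0 end.

Definition leqs (f g : laurent) : Prop := forall n : int, lcoef f n = lcoef g n.

Definition lconst (a : A) : laurent := Laurent 0 (fun i => if i == 0%N then a else 0).

Definition ladd (f g : laurent) : laurent :=
  let M := maxn (lshift f) (lshift g) in
  Laurent M (fun i => lcoef f (i%:Z - M%:Z) + lcoef g (i%:Z - M%:Z)).

Definition lopp (f : laurent) : laurent := Laurent (lshift f) (fun i => - lseq f i).

Definition lsub (f g : laurent) : laurent := ladd f (lopp g).

Definition lmul (f g : laurent) : laurent :=
  Laurent (lshift f + lshift g)
    (fun i => \sum_(j < i.+1) lseq f j * lseq g (i - j)%N).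

Definition lderiv (f : laurent) : laurent :=
  Laurent (lshift f).+1 (fun i => lseq f i *~ (i%:Z - (lshift f)%:Z)).

Definition derivation (D : A -> A) : Prop :=
  (forall a b, D (a + b) = D a + D b) /\ (forall a b, D (a * b) = D a * b + a * D b).

Definition GT_phik (x y z : A) (phi : nat -> A) (k : nat) : A :=
  if k == 1%N then - y
  else if k == 2%N then - x
  else if k == 3%N then - z - y ^+ 2 / 2%:R
  else phi k.

(* phi(lambda) = 1/lambda + sum_{k>=1} phi^(k) lambda^k *)
Definition GT_phi (x y z : A) (phi : nat -> A) : laurent :=
  Laurent 1 (fun i => match i with 0 => 1 | 1 => 0 | k.+2 => GT_phik x y z phi k.+1 end).

Definition GT_phiD (D : A -> A) (x y z : A) (phi : nat -> A) : laurent :=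
  Laurent 0 (fun k => if k is 0 then 0 else D (GT_phik x y z phi k)).

Definition GT_Q (zx zy : A) (ph : laurent) : laurent :=
  lsub (lsub (lmul ph ph) (lmul (lconst zx) ph)) (lconst zy).

Definition GT_Z (zx zy : A) (ph : laurent) : laurent :=
  lmul (GT_Q zx zy ph) (lmul (lderiv ph) (lderiv ph)).

Definition GT_shadow (Dx Dy : A -> A) (z f : A) : Prop :=
  Dy (Dy f) + Dx z * Dx (Dy f) - Dy z * Dx (Dx f)
    + Dx (Dy z) * Dx f - Dx (Dx z) * Dy f = 0.

End GT.

(* Work with power series in lambda: put F = lambda phi, Q = lambda^2 (phi^2 - z_x phi - z_y)
   and P = lambda^2 phi_lambda, so that lambda^6 Z = Q P^2.  The covering says
   phi_x = -1/(phi^2 - z_x phi - z_y) and phi_y = (phi - z_x) phi_x; differentiating these in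
   lambda shows D_x P = al P and D_y P = be P for explicit rational functions al, be.
   Hence the linearised Gibbons-Tsarev operator satisfies l(g P^2) = P^2 l'(g), where l' is l
   with D_x, D_y replaced by D_x + 2 al, D_y + 2 be, and everything reduces to the identity
   l'(Q) = 0: after eliminating D_x, D_y by the covering and the equation it is a polynomial
   identity modulo Q Q^-1 = 1.  Since Z starts at lambda^-6, its coefficients below n = -4
   vanish. *)

From Pilot Require Import Defs.
From HB Require Import structures.
From mathcomp Require Import all_boot all_order all_algebra.
From mathcomp Require Import ring zify boolp.
Set Implicit Arguments. Unset Strict Implicit. Unset Printing Implicit Defensive.
Import GRing.Theory.
Local Open Scope ring_scope.

Section Derivation.
Variables (R : comUnitRingType) (d : R -> R).
Hypothesis hd : derivation d.

Lemma derivationD a b : d (a + b) = d a + d b. Proof. exact: hd.1. Qed.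
Lemma derivationM a b : d (a * b) = d a * b + a * d b. Proof. exact: hd.2. Qed.

Lemma derivation0 : d 0 = 0.
Proof. by apply: (addrI (d 0)); rewrite -derivationD !addr0. Qed.

Lemma derivationN a : d (- a) = - d a.
Proof. by apply: (addrI (d a)); rewrite -derivationD !subrr derivation0. Qed.

Lemma derivationB a b : d (a - b) = d a - d b.
Proof. by rewrite derivationD derivationN. Qed.

Lemma derivation1 : d 1 = 0.
Proof.
have := derivationM 1 1; rewrite !mulr1 mul1r => d1.
by apply: (addrI (d 1)); rewrite addr0 -d1.
Qed.

Lemma derivationMn a n : d (a *+ n) = d a *+ n.
Proof. by elim: n => [|n IH]; rewrite ?derivation0 // !mulrS derivationD IH. Qed.

Lemma derivation_nat n : d n%:R = 0.
Proof. by rewrite derivationMn derivation1 mul0rn. Qed.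

Lemma derivation_sum n (F : 'I_n -> R) : d (\sum_(j < n) F j) = \sum_(j < n) d (F j).
Proof. exact: (big_morph d derivationD derivation0). Qed.

Lemma derivation_inv q u : q * u = 1 -> d u = - (u * u * d q).
Proof.
move=> qu; have dqu : d q * u + q * d u = 0 by rewrite -derivationM qu derivation1.
by apply/eqP; rewrite -subr_eq0 opprK -(mulr0 u) -dqu; apply/eqP; ring: qu.
Qed.
End Derivation.

Lemma take_polyM (R : nzSemiRingType) n (p q : {poly R}) :
  take_poly n (p * q) = take_poly n (take_poly n p * take_poly n q).
Proof.
apply/polyP => i; rewrite !coef_take_poly; case: ifP => // lt_in.
rewrite !coefM; apply: eq_bigr => j _; rewrite !coef_take_poly.
have := ltn_ord j => lt_ji; have -> : (j < n)%N by lia.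
by have -> : (i - j < n)%N by lia.
Qed.

Lemma take_poly_idem (R : nzSemiRingType) n (p : {poly R}) :
  take_poly n (take_poly n p) = take_poly n p.
Proof. exact/take_poly_id/size_take_poly. Qed.

Lemma take_polyMl (R : nzSemiRingType) n (p q : {poly R}) :
  take_poly n (take_poly n p * q) = take_poly n (p * q).
Proof. by rewrite take_polyM take_poly_idem -take_polyM. Qed.

Lemma take_polyMr (R : nzSemiRingType) n (p q : {poly R}) :
  take_poly n (p * take_poly n q) = take_poly n (p * q).
Proof. by rewrite take_polyM take_poly_idem -take_polyM. Qed.

Lemma take_poly_deriv (R : nzSemiRingType) n (p : {poly R}) :
  take_poly n (take_poly n.+1 p)^`() = take_poly n p^`().
Proof.
apply/polyP => i; rewrite !(coef_take_poly, coef_deriv) ltnS.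
by case: ltnP.
Qed.

Record fps (A : Type) := Fps { fcoef : nat -> A }.
Arguments Fps {A}.

HB.instance Definition _ (A : Type) := gen_eqMixin (fps A).
HB.instance Definition _ (A : Type) := gen_choiceMixin (fps A).

Lemma fpsP (A : Type) (f g : fps A) : fcoef f =1 fcoef g -> f = g.
Proof. by case: f; case: g => f g /= fg; congr Fps; apply: funext. Qed.

Section FpsZmod.
Variable A : zmodType.
Implicit Types f g h : fps A.

Definition fps0 : fps A := Fps (fun=> 0).
Definition fps_add f g := Fps (fun i => fcoef f i + fcoef g i).
Definition fps_opp f := Fps (fun i => - fcoef f i).

Lemma fps_addA : associative fps_add.
Proof. by move=> f g h; apply: fpsP => i /=; rewrite addrA. Qed.
Lemma fps_addC : commutative fps_add.
Proof. by move=> f g; apply: fpsP => i /=; rewrite addrC. Qed.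
Lemma fps_add0 : left_id fps0 fps_add.
Proof. by move=> f; apply: fpsP => i /=; rewrite add0r. Qed.
Lemma fps_addN : left_inverse fps0 fps_opp fps_add.
Proof. by move=> f; apply: fpsP => i /=; rewrite addNr. Qed.
End FpsZmod.

HB.instance Definition _ (A : zmodType) :=
  GRing.isZmodule.Build (fps A) (@fps_addA A) (@fps_addC A) (@fps_add0 A) (@fps_addN A).

Section FpsRing.
Variable A : comNzRingType.
Implicit Types f g h : fps A.

Lemma fcoefD f g i : fcoef (f + g) i = fcoef f i + fcoef g i. Proof. by []. Qed.
Lemma fcoefN f i : fcoef (- f) i = - fcoef f i. Proof. by []. Qed.
Lemma fcoefB f g i : fcoef (f - g) i = fcoef f i - fcoef g i. Proof. by []. Qed.

Lemma fcoefMn f n i : fcoef (f *+ n) i = fcoef f i *+ n.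
Proof. by elim: n => [|n IH]; rewrite ?mulr0n // !mulrS fcoefD IH. Qed.

Definition fps1 : fps A := Fps (fun i => (i == 0)%:R).
Definition fps_mul f g := Fps (fun i => \sum_(j < i.+1) fcoef f j * fcoef g (i - j)).

(* The truncation of [f] modulo [X^n]: the ring laws of series are transported from
   [{poly A}] through it. *)
Definition fps_poly n f : {poly A} := \poly_(i < n) fcoef f i.

Lemma coef_fps_poly n f i : (fps_poly n f)`_i = if (i < n)%N then fcoef f i else 0.
Proof. exact: coef_poly. Qed.

Lemma fps_polyP f g : (forall n, fps_poly n f = fps_poly n g) -> f = g.
Proof.
move=> fg; apply: fpsP => i.
by have /(congr1 (fun p : {poly A} => p`_i)) := fg i.+1; rewrite !coef_fps_poly ltnSn.
Qed.

Lemma take_fps_poly m n f : (n <= m)%N -> take_poly n (fps_poly m f) = fps_poly n f.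
Proof.
move=> le_nm; apply/polyP => i; rewrite coef_take_poly !coef_fps_poly.
by case: ltnP => // lt_in; have -> : (i < m)%N by lia.
Qed.

Lemma fps_polyD n f g : fps_poly n (f + g) = fps_poly n f + fps_poly n g.
Proof.
apply/polyP => i; rewrite coefD !coef_fps_poly.
by case: ifP; rewrite ?addr0.
Qed.

Lemma fps_poly_mul n f g :
  fps_poly n (fps_mul f g) = take_poly n (fps_poly n f * fps_poly n g).
Proof.
apply/polyP => i; rewrite coef_take_poly coef_fps_poly; case: ifP => // lt_in.
rewrite coefM; apply: eq_bigr => j _; rewrite !coef_fps_poly.
have := ltn_ord j => lt_ji; have -> : (j < n)%N by lia.
by have -> : (i - j < n)%N by lia.
Qed.

Lemma fps_poly1 n : fps_poly n fps1 = take_poly n 1.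
Proof.
apply/polyP => i; rewrite coef_take_poly coef_fps_poly coef1.
by case: ifP.
Qed.

Lemma fps_mulA : associative fps_mul.
Proof.
move=> f g h; apply: fps_polyP => n.
by rewrite !fps_poly_mul take_polyMl take_polyMr mulrA.
Qed.

Lemma fps_mulC : commutative fps_mul.
Proof. by move=> f g; apply: fps_polyP => n; rewrite !fps_poly_mul mulrC. Qed.

Lemma fps_mul1 : left_id fps1 fps_mul.
Proof.
move=> f; apply: fps_polyP => n.
by rewrite fps_poly_mul fps_poly1 take_polyMl mul1r -(take_fps_poly f (leqnn n)) take_poly_idem.
Qed.

Lemma fps_mulDl : left_distributive fps_mul +%R.
Proof.
move=> f g h; apply: fpsP => i /=.
by rewrite -big_split; apply: eq_bigr => j _; rewrite mulrDl.
Qed.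

Lemma fps1_neq0 : fps1 != 0.
Proof. by apply/eqP => /(congr1 (fun f => fcoef f 0)) /= /eqP; rewrite oner_eq0. Qed.
End FpsRing.

HB.instance Definition _ (A : comNzRingType) :=
  GRing.Zmodule_isComNzRing.Build (fps A)
    (@fps_mulA A) (@fps_mulC A) (@fps_mul1 A) (@fps_mulDl A) (@fps1_neq0 A).

Section FpsRingTheory.
Variable A : comNzRingType.
Implicit Types f g s : fps A.

Lemma fcoefM f g i : fcoef (f * g) i = \sum_(j < i.+1) fcoef f j * fcoef g (i - j).
Proof. by []. Qed.

Lemma fcoefM0 f g : fcoef (f * g) 0 = fcoef f 0 * fcoef g 0.
Proof. by rewrite fcoefM big_ord1. Qed.

Lemma fcoefX_lt s k m : fcoef s 0 = 0 -> (m < k)%N -> fcoef (s ^+ k) m = 0.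
Proof.
move=> s0; elim: k m => [|k IH] m // lt_mk.
rewrite exprS fcoefM big1 // => -[[|j] lt_jm] _; first by rewrite s0 mul0r.
by rewrite IH ?mulr0 //=; lia.
Qed.

(* [\sum_k s^k], cut off at [k = n] in degree [n]: higher powers do not
   contribute there when [s_0 = 0]. *)
Definition fps_geom s := Fps (fun n => \sum_(k < n.+1) fcoef (s ^+ k) n).

Lemma fcoef_geom s N n : fcoef s 0 = 0 -> (n < N)%N ->
  fcoef (fps_geom s) n = \sum_(k < N) fcoef (s ^+ k) n.
Proof.
move=> s0 lt_nN; rewrite /= (big_ord_widen N (fun k => fcoef (s ^+ k) n) lt_nN).
rewrite big_mkcond; apply: eq_bigr => k _; case: ltnP => // le_nk.
by rewrite fcoefX_lt //; lia.
Qed.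

Lemma fps_geom_inv s : fcoef s 0 = 0 -> fps_geom s * (1 - s) = 1.
Proof.
move=> s0; apply: fpsP => n; rewrite mulrBr mulr1 fcoefB mulrC fcoefM.
have -> : \sum_(j < n.+1) fcoef s j * fcoef (fps_geom s) (n - j) =
          \sum_(k < n.+1) fcoef (s ^+ k.+1) n.
  transitivity (\sum_(j < n.+1) \sum_(k < n.+1) fcoef s j * fcoef (s ^+ k) (n - j)).
    by apply: eq_bigr => j _; rewrite (fcoef_geom (N := n.+1) s0) ?mulr_sumr //; lia.
  by rewrite exchange_big; apply: eq_bigr => k _; rewrite exprS fcoefM.
by rewrite (fcoef_geom (N := n.+2) s0) // big_ord_recl addrK.
Qed.

Definition fpsC (c : A) : fps A := Fps (fun i => if i == 0%N then c else 0).

Lemma fcoefCM c f i : fcoef (fpsC c * f) i = c * fcoef f i.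
Proof. by rewrite fcoefM big_ord_recl subn0 big1 ?addr0 // => j _; rewrite mul0r. Qed.

Lemma fpsC_is_zmod_morphism : zmod_morphism fpsC.
Proof. by move=> a b; apply: fpsP => -[|i] /=; rewrite ?subrr. Qed.

Lemma fpsC_is_monoid_morphism : monoid_morphism fpsC.
Proof. by split=> [|a b]; apply: fpsP => -[|i]; rewrite ?fcoefCM /= ?mulr0. Qed.

HB.instance Definition _ := GRing.isZmodMorphism.Build A (fps A) fpsC fpsC_is_zmod_morphism.
HB.instance Definition _ := GRing.isMonoidMorphism.Build A (fps A) fpsC fpsC_is_monoid_morphism.

Definition fpsX : fps A := Fps (fun i => (i == 1%N)%:R).

Lemma fcoefXM f i : fcoef (fpsX * f) i = if i is k.+1 then fcoef f k else 0.
Proof.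
case: i => [|k]; first by rewrite fcoefM0 mul0r.
rewrite fcoefM !big_ord_recl big1 => [|j _]; last by rewrite mul0r.
by rewrite mul0r mul1r add0r addr0 subSS subn0.
Qed.

Lemma fcoefXnM d f i : fcoef (fpsX ^+ d * f) i = if (d <= i)%N then fcoef f (i - d) else 0.
Proof.
elim: d f i => [|d IH] f i; first by rewrite expr0 mul1r subn0.
by rewrite exprS -mulrA fcoefXM; case: i => [|i]; rewrite ?IH ?subSS.
Qed.

Definition fps_deriv f := Fps (fun i => fcoef f i.+1 *+ i.+1).

Lemma fps_poly_deriv n f : fps_poly n (fps_deriv f) = take_poly n (fps_poly n.+1 f)^`().
Proof.
apply/polyP => i; rewrite !(coef_take_poly, coef_fps_poly, coef_deriv) ltnS.
by case: ltnP.
Qed.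

Lemma fps_derivD f g : fps_deriv (f + g) = fps_deriv f + fps_deriv g.
Proof. by apply: fpsP => i; apply: mulrnDl. Qed.

Lemma fps_derivM f g : fps_deriv (f * g) = fps_deriv f * g + f * fps_deriv g.
Proof.
apply: fps_polyP => n.
rewrite fps_polyD !fps_poly_mul !fps_poly_deriv fps_poly_mul take_poly_deriv derivM take_polyD.
by rewrite -!(take_fps_poly _ (leqnSn n)) !take_polyMl !take_polyMr.
Qed.

Lemma fps_derivX : fps_deriv fpsX = 1.
Proof. by apply: fpsP => -[|i] /=; rewrite ?mul0rn. Qed.

Lemma fps_derivC c : fps_deriv (fpsC c) = 0.
Proof. by apply: fpsP => i /=; rewrite mul0rn. Qed.
End FpsRingTheory.
Arguments fpsX {A}.

Section FpsUnitRing.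
Variable A : comUnitRingType.
Implicit Types f g : fps A.

Definition fps_unit : {pred fps A} := fun f => fcoef f 0 \is a GRing.unit.

Definition fps_inv f :=
  if fcoef f 0 \is a GRing.unit then
    fpsC (fcoef f 0)^-1 * fps_geom (1 - fpsC (fcoef f 0)^-1 * f)
  else f.

Lemma fps_mulVx : {in fps_unit, left_inverse 1 fps_inv *%R}.
Proof.
move=> f uf; rewrite /fps_inv [_ \is a _]uf mulrAC mulrC.
set s := 1 - _; have -> : fpsC (fcoef f 0)^-1 * f = 1 - s by rewrite opprB addrC subrK.
by apply: fps_geom_inv; rewrite /s fcoefB fcoefCM mulVr ?subrr.
Qed.

Lemma fps_unitPl f g : g * f = 1 -> fps_unit f.
Proof.
move/(congr1 (fun h => fcoef h 0)); rewrite fcoefM0 => gf.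
by apply/unitrPr; exists (fcoef g 0); rewrite mulrC.
Qed.

Lemma fps_inv_out : {in [predC fps_unit], fps_inv =1 id}.
Proof. by move=> f /negbTE nuf; rewrite /fps_inv [_ \is a _]nuf. Qed.
End FpsUnitRing.

HB.instance Definition _ (A : comUnitRingType) :=
  GRing.ComNzRing_hasMulInverse.Build (fps A)
    (@fps_mulVx A) (@fps_unitPl A) (@fps_inv_out A).

Lemma fps_unitE (A : comUnitRingType) (f : fps A) :
  (f \is a GRing.unit) = (fcoef f 0 \is a GRing.unit).
Proof. by []. Qed.

Section FpsDerivations.
Variable A : comUnitRingType.
Implicit Types (f : fps A) (D : A -> A).

Lemma derivation_fps_deriv : derivation (@fps_deriv A).
Proof. by split; [apply: fps_derivD | apply: fps_derivM]. Qed.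

Definition map_fps D f := Fps (fun i => D (fcoef f i)).

Lemma derivation_map_fps D : derivation D -> derivation (map_fps D).
Proof.
move=> hD; split=> f g; apply: fpsP => i /=; first exact: derivationD.
rewrite derivation_sum // -big_split; apply: eq_bigr => j _ /=.
exact: derivationM.
Qed.

Lemma map_fpsC D c : derivation D -> map_fps D (fpsC c) = fpsC (D c).
Proof. by move=> hD; apply: fpsP => -[|i] //=; rewrite derivation0. Qed.

Lemma map_fpsX D : derivation D -> map_fps D fpsX = 0.
Proof. by move=> hD; apply: fpsP => -[|[|i]] /=; rewrite ?derivation0 ?derivation1. Qed.

Lemma map_fps_comm D1 D2 f : (forall a, D1 (D2 a) = D2 (D1 a)) ->
  map_fps D1 (map_fps D2 f) = map_fps D2 (map_fps D1 f).
Proof. by move=> D12; apply: fpsP => i /=. Qed.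

Lemma fps_deriv_map D f : derivation D ->
  fps_deriv (map_fps D f) = map_fps D (fps_deriv f).
Proof. by move=> hD; apply: fpsP => i /=; rewrite derivationMn. Qed.
End FpsDerivations.

Definition GT_lin (R : ringType) (dx dy : R -> R) (z : R) (Lx Ly : R -> R) (f : R) : R :=
  Ly (Ly f) + dx z * Lx (Ly f) - dy z * Lx (Lx f) + dx (dy z) * Lx f - dx (dx z) * Ly f.

Definition twist (R : ringType) (w : R) (d : R -> R) (g : R) : R := d g + 2%:R * w * g.

Lemma derivation_mul_sqr (R : comUnitRingType) (d : R -> R) (P w g : R) :
  derivation d -> d P = w * P -> d (g * (P * P)) = twist w d g * (P * P).
Proof. by move=> hd dP; rewrite /twist !(derivationM hd) dP; ring. Qed.

Lemma GT_lin_mul_sqr (R : comUnitRingType) (dx dy : R -> R) (z P al be g : R) :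
  derivation dx -> derivation dy -> dx P = al * P -> dy P = be * P ->
  GT_lin dx dy z dx dy (g * (P * P)) = P * P * GT_lin dx dy z (twist al dx) (twist be dy) g.
Proof.
move=> hdx hdy dxP dyP.
by rewrite /GT_lin !(derivation_mul_sqr _ hdx dxP, derivation_mul_sqr _ hdy dyP); ring.
Qed.

Section GibbonsTsarevCovering.
Variables (R : comUnitRingType) (dx dy dl : R -> R).
Hypotheses (hdx : derivation dx) (hdy : derivation dy) (hdl : derivation dl).
Hypotheses (dyxC : forall f, dy (dx f) = dx (dy f))
  (dlxC : forall f, dl (dx f) = dx (dl f)) (dlyC : forall f, dl (dy f) = dy (dl f)).
Variable z : R.
Hypothesis GT : dy (dy z) + dx z * dx (dy z) - dy z * dx (dx z) + 1 = 0.
Hypotheses (dl_zx : dl (dx z) = 0) (dl_zy : dl (dy z) = 0).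

(* For series in [lambda] one takes [dl = d/dlambda], [l = lambda], [F = lambda phi]; then
   [Q = lambda^2 (phi^2 - z_x phi - z_y)], [P = lambda^2 phi_lambda], [Q P^2 = lambda^6 Z],
   and [covx], [covy] are the covering equations multiplied by [lambda^3]. *)
Variables F l u : R.
Hypotheses (dx_l : dx l = 0) (dy_l : dy l = 0) (dl_l : dl l = 1).
Let Q := F * F - dx z * l * F - dy z * (l * l).
Hypothesis Qu : Q * u = 1.
Hypotheses (covx : Q * dx F = - (l * l * l))
  (covy : Q * dy F = - (l * l * (F - dx z * l))).

Let P := l * dl F - F.
Let al := (2%:R * F - dx z * l) * (l * l * l) * (u * u).
Let be := ((F - dx z * l) * (F - dx z * l) + dy z * (l * l)) * (l * l) * (u * u).

(* [Q u = 1] oriented with a monomial left-hand side, so that [ring: QuE] computes modulo it. *)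
Lemma QuE : F * F * u = 1 + dx z * l * F * u + dy z * (l * l) * u.
Proof. by rewrite -Qu /Q; ring. Qed.

Lemma dxF : dx F = - (l * l * l * u).
Proof. by rewrite -[dx F]mul1r -Qu mulrAC covx; ring. Qed.

Lemma dyF : dy F = - (l * l * (F - dx z * l) * u).
Proof. by rewrite -[dy F]mul1r -Qu mulrAC covy; ring. Qed.

Lemma GT_zyy : dy (dy z) = -1 - dx z * dx (dy z) + dy z * dx (dx z).
Proof. by apply/eqP; rewrite -subr_eq0 -GT; apply/eqP; ring. Qed.

(* Differentiating [phi_x = -1/(phi^2 - z_x phi - z_y)] in [lambda] gives
   [D_x phi_lambda = (2 phi - z_x) phi_lambda / (phi^2 - z_x phi - z_y)^2], i.e. [al P];
   [be] arises in the same way from [phi_y = (phi - z_x) phi_x]. *)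
Lemma dx_P : dx P = al * P.
Proof.
rewrite /P /al !(derivationB hdx, derivationM hdx) dx_l -dlxC dxF.
rewrite !(derivationN hdl, derivationM hdl) (derivation_inv hdl Qu) /Q.
rewrite !(derivationB hdl, derivationM hdl) dl_l dl_zx dl_zy.
ring: QuE.
Qed.

Lemma dy_P : dy P = be * P.
Proof.
rewrite /P /be !(derivationB hdy, derivationM hdy) dy_l -dlyC dyF.
rewrite !(derivationN hdl, derivationM hdl, derivationB hdl) (derivation_inv hdl Qu) /Q.
rewrite !(derivationB hdl, derivationM hdl) dl_l dl_zx dl_zy.
ring: QuE.
Qed.

Lemma twist_dx_Q : twist al dx Q =
  (2%:R * F - dx z * l) * (l * l * l) * u - l * (dx (dx z) * F + dx (dy z) * l).
Proof.
rewrite /twist /al /Q !(derivationB hdx, derivationM hdx) dxF dx_l.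
ring: QuE.
Qed.

Lemma twist_dy_Q : twist be dy Q =
  ((F - dx z * l) * (F - dx z * l) + dy z * (l * l)) * (l * l) * u
  - l * (dx (dy z) * (F - dx z * l) + dx (dx z) * dy z * l).
Proof.
rewrite /twist /be /Q !(derivationB hdy, derivationM hdy) dyF dy_l dyxC GT_zyy.
ring: QuE.
Qed.

Lemma GT_lin_twist_Q_eq0 : GT_lin dx dy z (twist al dx) (twist be dy) Q = 0.
Proof.
rewrite /GT_lin twist_dy_Q twist_dx_Q /twist /al /be.
have dxu := derivation_inv hdx Qu; have dyu := derivation_inv hdy Qu.
rewrite !(derivationD hdx, derivationB hdx, derivationM hdx, derivationN hdx, derivation_nat hdx,
          derivationD hdy, derivationB hdy, derivationM hdy, derivationN hdy, derivation_nat hdy,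
          derivation1 hdx, derivation1 hdy, dxu, dyu, dxF, dyF, dx_l, dy_l, dyxC, GT_zyy).
ring: QuE.
Qed.

Theorem GT_lin_QPP_eq0 : GT_lin dx dy z dx dy (Q * (P * P)) = 0.
Proof. by rewrite (GT_lin_mul_sqr _ _ hdx hdy dx_P dy_P) GT_lin_twist_Q_eq0 mulr0. Qed.
End GibbonsTsarevCovering.

Section LaurentToFps.
Variable A : comUnitRingType.
Implicit Types f g : laurent A.

(* A Laurent series [f] is encoded by [lambda^(lshift f) f]: that is [fps_of_laurent f];
   [shifted_fps K f] is [lambda^K f], a power series when [lshift f <= K]. *)
Definition fps_of_laurent f : fps A := Fps (lseq f).

Definition shifted_fps K f : fps A := Fps (fun i => lcoef f (i%:Z - K%:Z)).

Lemma lcoef_lt_lshift f n : n + (Defs.lshift f)%:Z < 0 -> lcoef f n = 0.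
Proof. by rewrite /lcoef; case: (n + _)%R => // i; lia. Qed.

Lemma lcoefE f n : 0 <= n + (Defs.lshift f)%:Z ->
  lcoef f n = fcoef (fps_of_laurent f) (absz (n + (Defs.lshift f)%:Z)).
Proof. by rewrite /lcoef; case: (n + _)%R. Qed.

Lemma lcoefD f g n : lcoef (ladd f g) n = lcoef f n + lcoef g n.
Proof.
rewrite {1}/lcoef /=; set M := maxn _ _.
case E: (n + M%:Z)%R => [i|k]; first by rewrite (_ : i%:Z - M%:Z = n) //; lia.
by rewrite !lcoef_lt_lshift ?addr0 //; lia.
Qed.

Lemma lcoefN f n : lcoef (lopp f) n = - lcoef f n.
Proof. by rewrite /lcoef /=; case: (n + _)%R => // k; rewrite oppr0. Qed.

Lemma shifted_fpsB K f g : shifted_fps K (lsub f g) = shifted_fps K f - shifted_fps K g.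
Proof. by apply: fpsP => i; rewrite fcoefB /= lcoefD lcoefN. Qed.

Lemma shifted_fpsN K f : shifted_fps K (lopp f) = - shifted_fps K f.
Proof. by apply: fpsP => i; rewrite fcoefN /= lcoefN. Qed.

Lemma shifted_fpsE K f : (Defs.lshift f <= K)%N ->
  shifted_fps K f = fpsX ^+ (K - Defs.lshift f) * fps_of_laurent f.
Proof.
move=> le_fK; apply: fpsP => i; rewrite fcoefXnM /=.
case: leqP => [le_i | lt_i]; last by rewrite lcoef_lt_lshift //; lia.
by rewrite /lcoef (_ : _ + _ = (i - (K - Defs.lshift f))%N%:Z) //; lia.
Qed.

Lemma fps_of_laurentE f : fps_of_laurent f = shifted_fps (Defs.lshift f) f.
Proof. by rewrite shifted_fpsE // subnn expr0 mul1r. Qed.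

Lemma shifted_fps_leqs K f g : leqs f g -> shifted_fps K f = shifted_fps K g.
Proof. by move=> fg; apply: fpsP => i /=; rewrite fg. Qed.

Lemma fps_of_laurent_lmul f g : fps_of_laurent (lmul f g) = fps_of_laurent f * fps_of_laurent g.
Proof. by []. Qed.

Lemma fps_of_laurent_lconst a : fps_of_laurent (lconst a) = fpsC a.
Proof. by []. Qed.

Lemma fps_of_laurent_lderiv f :
  fps_of_laurent (lderiv f) =
    fpsX * fps_deriv (fps_of_laurent f) - fps_of_laurent f *+ Defs.lshift f.
Proof.
apply: fpsP => -[|i]; rewrite fcoefB fcoefXM fcoefMn /=.
  by rewrite sub0r mulrNz sub0r -pmulrn.
by rewrite mulrzBr -!pmulrn.
Qed.
End LaurentToFps.

Lemma fcoef_GT_shadow (A : comUnitRingType) (Dx Dy : A -> A) (z : A) (f : fps A) i :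
  derivation Dx -> derivation Dy ->
  GT_lin (map_fps Dx) (map_fps Dy) (fpsC z) (map_fps Dx) (map_fps Dy) f = 0 ->
  GT_shadow Dx Dy z (fcoef f i).
Proof.
move=> hDx hDy /(congr1 (fun g => fcoef g i)).
by rewrite /GT_lin !map_fpsC // !(fcoefD, fcoefN, fcoefCM).
Qed.

Section GibbonsTsarevSeries.
Variables (A : comUnitRingType) (x y z : A) (phi : nat -> A).
Local Notation ph := (GT_phi x y z phi).
Local Notation F := (fps_of_laurent ph).

Lemma fps_GT_Q zx zy :
  fps_of_laurent (GT_Q zx zy ph) = F * F - fpsC zx * fpsX * F - fpsC zy * (fpsX * fpsX).
Proof.
rewrite fps_of_laurentE [Defs.lshift _]/= !shifted_fpsB !shifted_fpsE //=.
by rewrite !fps_of_laurent_lmul !fps_of_laurent_lconst expr0 expr1 expr2; ring.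
Qed.

Lemma fps_GT_lderiv : fps_of_laurent (lderiv ph) = fpsX * fps_deriv F - F.
Proof. by rewrite fps_of_laurent_lderiv mulr1n. Qed.

Lemma map_fps_GT_phi D : derivation D -> map_fps D F = fpsX * fps_of_laurent (GT_phiD D x y z phi).
Proof.
move=> hD; apply: fpsP => i; rewrite fcoefXM.
by case: i => [|[|i]] /=; rewrite ?derivation0 ?derivation1.
Qed.

Lemma fps_GT_covering zx zy G H : leqs (lmul (GT_Q zx zy ph) G) H -> Defs.lshift G = 0%N ->
  fps_of_laurent (GT_Q zx zy ph) * fps_of_laurent G = shifted_fps 2 H.
Proof.
move=> cov G0; rewrite -(shifted_fps_leqs 2 cov) shifted_fpsE /= G0 //.
by rewrite subnn expr0 mul1r.
Qed.
End GibbonsTsarevSeries.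

Section GibbonsTsarevShadow.
Variables (A : comUnitRingType) (Dx Dy : A -> A) (x y z : A) (phi : nat -> A).
Hypotheses (hDx : derivation Dx) (hDy : derivation Dy) (hcomm : forall a, Dx (Dy a) = Dy (Dx a)).
Hypothesis hGT : Dy (Dy z) + Dx z * Dx (Dy z) - Dy z * Dx (Dx z) + 1 = 0.
Local Notation ph := (GT_phi x y z phi).
Local Notation F := (fps_of_laurent ph).
Local Notation dx := (map_fps Dx).
Local Notation dy := (map_fps Dy).
Local Notation Q := (F * F - dx (fpsC z) * fpsX * F - dy (fpsC z) * (fpsX * fpsX)).
Hypotheses
  (hcovx : leqs (lmul (GT_Q (Dx z) (Dy z) ph) (GT_phiD Dx x y z phi)) (lconst (-1)))
  (hcovy : leqs (lmul (GT_Q (Dx z) (Dy z) ph) (GT_phiD Dy x y z phi))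
                (lopp (lsub ph (lconst (Dx z))))).

Lemma fps_GT_Q_map : fps_of_laurent (GT_Q (Dx z) (Dy z) ph) = Q.
Proof. by rewrite fps_GT_Q !map_fpsC. Qed.

Lemma GT_map_fpsC : dy (dy (fpsC z)) + dx (fpsC z) * dx (dy (fpsC z))
  - dy (fpsC z) * dx (dx (fpsC z)) + 1 = 0.
Proof.
have : fpsC (Dy (Dy z) + Dx z * Dx (Dy z) - Dy z * Dx (Dx z) + 1) = 0 by rewrite hGT rmorph0.
by rewrite !(rmorphD, rmorphN, rmorphM) rmorph1 !map_fpsC.
Qed.

Lemma fps_covering_x : Q * dx F = - (fpsX * fpsX * fpsX).
Proof.
rewrite -fps_GT_Q_map map_fps_GT_phi // mulrCA (fps_GT_covering hcovx) //.
by rewrite shifted_fpsE // fps_of_laurent_lconst rmorphN1 expr2; ring.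
Qed.

Lemma fps_covering_y : Q * dy F = - (fpsX * fpsX * (F - dx (fpsC z) * fpsX)).
Proof.
rewrite -fps_GT_Q_map map_fps_GT_phi // mulrCA (fps_GT_covering hcovy) //.
rewrite shifted_fpsN shifted_fpsB !shifted_fpsE // fps_of_laurent_lconst map_fpsC //.
by rewrite expr1 expr2; ring.
Qed.

Lemma fps_GT_Q_unit : Q \is a GRing.unit.
Proof.
rewrite -fps_GT_Q_map fps_unitE fps_GT_Q !fcoefB !fcoefM0 /=.
by rewrite !(mulr0n, mulr0, mul0r, subr0, mulr1) unitr1.
Qed.

Lemma GT_lin_fps_Z_eq0 :
  GT_lin dx dy (fpsC z) dx dy (fps_of_laurent (GT_Z (Dx z) (Dy z) ph)) = 0.
Proof.
have dl_z D : derivation D -> fps_deriv (map_fps D (fpsC z)) = 0.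
  by move=> hD; rewrite map_fpsC // fps_derivC.
have := GT_lin_QPP_eq0 (derivation_map_fps hDx) (derivation_map_fps hDy)
  (derivation_fps_deriv A) (fun f => esym (map_fps_comm f hcomm))
  (fun f => fps_deriv_map f hDx) (fun f => fps_deriv_map f hDy) GT_map_fpsC
  (dl_z _ hDx) (dl_z _ hDy) (map_fpsX hDx) (map_fpsX hDy) (fps_derivX A)
  (mulrV fps_GT_Q_unit) fps_covering_x fps_covering_y.
by rewrite /GT_Z !fps_of_laurent_lmul fps_GT_Q_map fps_GT_lderiv.
Qed.
End GibbonsTsarevShadow.

Theorem mainTheorem11 (A : comUnitRingType) (Dx Dy : A -> A)
  (x y z : A) (phi : nat -> A)
  (h2 : (2%:R : A) \is a GRing.unit)
  (hDx : derivation Dx) (hDy : derivation Dy)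
  (hcomm : forall a, Dx (Dy a) = Dy (Dx a))
  (hxx : Dx x = 1) (hxy : Dy x = 0) (hyx : Dx y = 0) (hyy : Dy y = 1)
  (hGT : Dy (Dy z) + Dx z * Dx (Dy z) - Dy z * Dx (Dx z) + 1 = 0)
  (hcovx : leqs (lmul (GT_Q (Dx z) (Dy z) (GT_phi x y z phi)) (GT_phiD Dx x y z phi))
                (lconst (-1)))
  (hcovy : leqs (lmul (GT_Q (Dx z) (Dy z) (GT_phi x y z phi)) (GT_phiD Dy x y z phi))
                (lopp (lsub (GT_phi x y z phi) (lconst (Dx z))))) :
  (forall n : int, n < -4 -> lcoef (GT_Z (Dx z) (Dy z) (GT_phi x y z phi)) (n - 2) = 0)
  /\ (forall n : int, -4 <= n ->
        GT_shadow Dx Dy z (lcoef (GT_Z (Dx z) (Dy z) (GT_phi x y z phi)) (n - 2))).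
Proof.
have shZ : Defs.lshift (GT_Z (Dx z) (Dy z) (GT_phi x y z phi)) = 6%N by [].
split=> n hn; first by apply: lcoef_lt_lshift; rewrite shZ; lia.
rewrite lcoefE; last by rewrite shZ; lia.
apply: (fcoef_GT_shadow _ hDx hDy).
exact: (GT_lin_fps_Z_eq0 hDx hDy hcomm hGT hcovx hcovy).
Qed.
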